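(* Assume (A), (R), (S) and let $c=(c_k)$ and $d=(d_k)$ be global solutions of (E) (with initial data in $\ell^1_1$). Then for each $\mu\ge1$, $$\frac{d}{dt}\sum_{k=1}^\infty k^\mu|c_k-d_k|\le\Bigl(2A_*(C_\mu+2)\sum_{\ell=1}^\infty\ell^{\mu+\beta}(c_\ell+d_\ell)-R_*\Bigr)\sum_{k=1}^\infty k^\mu|c_k-d_k|\quad\text{for all }t>0,$$ where $C_\mu=2^{\max\{\mu-2,0\}}\max\{\mu,\mu(\mu-1)\}$.
   Context: Throughout, $\mathbb N=\{1,2,\dots\}$. We consider the forced discrete coagulation equation $$\frac{d}{dt}c_k=\frac12\sum_{\ell=1}^{k-1}a_{k-\ell,\ell}c_{k-\ell}c_\ell-c_k\sum_{\ell=1}^{\infty}a_{k,\ell}c_\ell+s_k-r_kc_k,\qquad k\in\mathbb N,\tag{E}$$ with real coefficients satisfying the standing assumptions: (A) $a_{k,\ell}=a_{\ell,k}$ and $0\le a_{k,\ell}\le A_*(k^\alpha\ell^\beta+k^\beta\ell^\alpha)$ for all $k,\ell\in\mathbb N$, with constants $A_*>0$, $\alpha,\beta\in[0,1]$, $\alpha\le\beta$; (R) $r_k\ge R_*k^\gamma$ for all $k\in\mathbb N$, with $R_*>0$ and $\gamma>\max\{0,\alpha+\beta-1\}$; (S) $s_k\ge 0$ for all $k$, and for every $\mu\ge0$ there is $\mathfrak s_\mu>0$ with $\sum_{k\ge1}k^\mu s_k\le\mathfrak s_\mu$. For $\mu\ge0$, $\ell^1_\mu$ is the set of sequences $(c_k)_{k\in\mathbb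 N}$ with $c_k\in[0,\infty)$ and $\sum_k k^\mu c_k<\infty$. Solution: a sequence $c=(c_k)_{k\in\mathbb N}$ of continuous functions $c_k:[0,T)\to[0,\infty)$ is a solution of (E) on $[0,T)$ with initial condition $c^{\mathrm{in}}\in\ell^1_1$ if (i) for each $k$, (E) holds for all $t\in(0,T)$; (ii) for each $\mu\ge1$, $c\in L^\infty([0,T),\ell^1_1)\cap C^1((0,T),\ell^1_\mu)$; (iii) $c_k(0)=c_k^{\mathrm{in}}$ for all $k$. It is a global solution if $T=\infty$. *)

From Stdlib Require Import Reals Lra ClassicalEpsilon.
Open Scope R_scope.

Fixpoint sumR (n : nat) (f : nat -> R) : R :=
  match n with O => 0 | S m => sumR m f + f (S m) end.

Definition has_sum1 (u : nat -> R) (l : R) : Prop :=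
  infinite_sum (fun n => u (S n)) l.
Definition summable1 (u : nat -> R) : Prop := exists l, has_sum1 u l.
(* The value of the series (meaningful when it converges). *)
Definition Sum1 (u : nat -> R) : R :=
  epsilon (inhabits 0) (fun l => has_sum1 u l).

Definition pw (k : nat) (mu : R) : R := Rpower (INR k) mu.

Definition in_l1 (mu : R) (x : nat -> R) : Prop :=
  (forall k, (1 <= k)%nat -> 0 <= x k) /\ summable1 (fun k => pw k mu * x k).

(* the (real) Banach space containing l^1_mu, with its norm *)
Definition abs_summ (mu : R) (x : nat -> R) : Prop :=
  summable1 (fun k => pw k mu * Rabs (x k)).
Definition norm_mu (mu : R) (x : nat -> R) : R :=
  Sum1 (fun k => pw k mu * Rabs (x k)).

Definition assumption_A (a : nat -> nat -> R) (Astar alpha beta : R) : Prop :=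
  0 < Astar /\ 0 <= alpha <= 1 /\ 0 <= beta <= 1 /\ alpha <= beta /\
  forall k l, (1 <= k)%nat -> (1 <= l)%nat ->
    a k l = a l k /\
    0 <= a k l <= Astar * (pw k alpha * pw l beta + pw k beta * pw l alpha).

Definition assumption_R (r : nat -> R) (Rstar gamma alpha beta : R) : Prop :=
  0 < Rstar /\ Rmax 0 (alpha + beta - 1) < gamma /\
  forall k, (1 <= k)%nat -> Rstar * pw k gamma <= r k.

Definition assumption_S (s : nat -> R) : Prop :=
  (forall k, (1 <= k)%nat -> 0 <= s k) /\
  forall mu, 0 <= mu -> exists smu, 0 < smu /\
    forall n, sumR n (fun k => pw k mu * s k) <= smu.

Definition coag_rhs (a : nat -> nat -> R) (s r : nat -> R)
    (c : nat -> R -> R) (k : nat) (t : R) : R :=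
  / 2 * sumR (k - 1) (fun l => a (k - l)%nat l * c (k - l)%nat t * c l t)
  - c k t * Sum1 (fun l => a k l * c l t) + s k - r k * c k t.

Definition cont_nonneg (f : R -> R) : Prop :=
  forall t, 0 <= t -> forall eps, 0 < eps -> exists del, 0 < del /\
    forall t', 0 <= t' -> Rabs (t' - t) < del -> Rabs (f t' - f t) < eps.

(* t |-> (c_k(t))_k belongs to C^1((0,oo), l^1_mu) *)
Definition C1_l1 (mu : R) (c : nat -> R -> R) : Prop :=
  exists D : R -> nat -> R,
    (forall t, 0 < t -> abs_summ mu (fun k => c k t) /\ abs_summ mu (D t)) /\
    (forall t, 0 < t -> forall eps, 0 < eps -> exists del, 0 < del /\
       forall h, h <> 0 -> Rabs h < del -> 0 < t + h ->
         norm_mu mu (fun k => (c k (t + h) - c k t) / h - D t k) < eps) /\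
    (forall t, 0 < t -> forall eps, 0 < eps -> exists del, 0 < del /\
       forall t', 0 < t' -> Rabs (t' - t) < del ->
         norm_mu mu (fun k => D t' k - D t k) < eps).

Definition global_solution (a : nat -> nat -> R) (s r : nat -> R)
    (cin : nat -> R) (c : nat -> R -> R) : Prop :=
  (forall k, (1 <= k)%nat ->
     (forall t, 0 <= t -> 0 <= c k t) /\ cont_nonneg (c k)) /\
  (forall k, (1 <= k)%nat -> forall t, 0 < t ->
     derivable_pt_lim (c k) t (coag_rhs a s r c k t)) /\
  (* (ii) L^oo([0,oo), l^1_1) *)
  (exists M, forall t, 0 <= t -> forall n, sumR n (fun k => pw k 1 * c k t) <= M) /\
  (forall mu, 1 <= mu -> C1_l1 mu c) /\
  (forall k, (1 <= k)%nat -> c k 0 = cin k).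

Definition Cmu (mu : R) : R :=
  Rpower 2 (Rmax (mu - 2) 0) * Rmax mu (mu * (mu - 1)).

Definition Ndist (mu : R) (c d : nat -> R -> R) (t : R) : R :=
  Sum1 (fun k => pw k mu * Rabs (c k t - d k t)).

(* "d/dt f (t) <= b" read as: the (two-sided) upper Dini derivative of f at t is <= b *)
Definition ddt_le (f : R -> R) (t b : R) : Prop :=
  forall eps, 0 < eps -> exists del, 0 < del /\
    forall h, h <> 0 -> Rabs h < del -> 0 < t + h ->
      (f (t + h) - f t) / h <= b + eps.

(* Write u = c - d, so that N(t) = sum_k k^mu |u_k(t)|. Since u is C^1 in l^1_mu, the difference
   quotients of N are, up to o(1), sums sum_k k^mu sg_k u_k' where sg is a sign sequence of u(t)
   (on the set u_k(t) = 0 the sign of h decides sg_k). Plugging (E) in and truncating the loss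
   series, the coagulation terms symmetrise into
     1/2 sum_{i,j} a_ij (c_i c_j - d_i d_j) (sg_{i+j} (i+j)^mu - sg_i i^mu - sg_j j^mu),
   and c_i c_j - d_i d_j = c_j u_i + d_i u_j together with sg_i u_i = |u_i| bounds each term by
   a_ij ((i+j)^mu - i^mu + j^mu) |u_i| c_j (and symmetrically). The mean value theorem and
   a_ij <= 2 A_* i^beta j^beta give a_ij ((i+j)^mu - i^mu + j^mu) <= 2 A_* (mu 2^(mu-1) + 1) i^mu j^(mu+beta).
   The loss tails contribute 2 A_* N V with V = sum_l l^(mu+beta) (c_l + d_l), the removal term
   at most -R_* N, and mu 2^(mu-1) <= 2 C_mu + 1 turns the constant into 2 A_* (C_mu + 2). *)

From Stdlib Require Import Reals Lra Lia ClassicalEpsilon.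
Open Scope R_scope.

(** * Finite sums and series over [N] *)

Lemma sumR_ext n f g :
  (forall k, (1 <= k <= n)%nat -> f k = g k) -> sumR n f = sumR n g.
Proof.
  induction n as [|n IH]; intros E; simpl; [reflexivity|].
  rewrite IH, (E (S n)) by (lia || (intros; apply E; lia)); reflexivity.
Qed.

Lemma sumR_add n f g : sumR n (fun k => f k + g k) = sumR n f + sumR n g.
Proof. induction n; simpl; [lra | rewrite IHn; ring]. Qed.

Lemma sumR_sub n f g : sumR n (fun k => f k - g k) = sumR n f - sumR n g.
Proof. induction n; simpl; [lra | rewrite IHn; ring]. Qed.

Lemma sumR_scal n c f : sumR n (fun k => c * f k) = c * sumR n f.
Proof. induction n; simpl; [lra | rewrite IHn; ring]. Qed.

Lemma sumR_opp n f : sumR n (fun k => - f k) = - sumR n f.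
Proof. induction n; simpl; [lra | rewrite IHn; ring]. Qed.

Lemma sumR_le n f g :
  (forall k, (1 <= k <= n)%nat -> f k <= g k) -> sumR n f <= sumR n g.
Proof.
  induction n as [|n IH]; intros H; simpl; [lra|].
  assert (sumR n f <= sumR n g) by (apply IH; intros; apply H; lia).
  assert (f (S n) <= g (S n)) by (apply H; lia).
  lra.
Qed.

Lemma sumR_nonneg n f : (forall k, (1 <= k)%nat -> 0 <= f k) -> 0 <= sumR n f.
Proof.
  intros H; induction n; simpl; [lra|].
  assert (0 <= f (S n)) by (apply H; lia). lra.
Qed.

Lemma sumR_le_mono m n f :
  (m <= n)%nat -> (forall k, (1 <= k)%nat -> 0 <= f k) -> sumR m f <= sumR n f.
Proof.
  intros Hmn H; induction Hmn; simpl; [lra|].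
  assert (0 <= f (S m0)) by (apply H; lia). lra.
Qed.

Lemma sumR_shift n f : sumR (S n) f = f 1%nat + sumR n (fun k => f (S k)).
Proof. induction n; simpl in *; [ring | rewrite IHn; ring]. Qed.

Lemma sumR_rev n g : sumR n (fun l => g (S n - l)%nat) = sumR n g.
Proof.
  induction n as [|n IH]; [reflexivity|].
  rewrite sumR_shift; simpl (S (S n) - 1)%nat.
  rewrite (sumR_ext n _ (fun k => g (S n - k)%nat)), IH by reflexivity.
  simpl; ring.
Qed.

Lemma has_sum1_iff u l : has_sum1 u l <-> Un_cv (fun n => sumR n u) l.
Proof.
  assert (E : forall n, sum_f_R0 (fun k => u (S k)) n = sumR (S n) u).
  { induction n; simpl; [ring | rewrite IHn; simpl; ring]. }
  unfold has_sum1, infinite_sum, Un_cv.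
  split; intros H eps Heps; destruct (H eps Heps) as [N HN].
  - exists (S N); intros [|n] Hn; [lia|]. rewrite <- E. apply HN; lia.
  - exists N; intros n Hn. rewrite E. apply HN; lia.
Qed.

Lemma Sum1_spec u : summable1 u -> has_sum1 u (Sum1 u).
Proof. intros H. exact (epsilon_spec _ _ H). Qed.

Lemma Sum1_eq u l : has_sum1 u l -> Sum1 u = l.
Proof.
  intros H. assert (H' := Sum1_spec u (ex_intro _ l H)).
  rewrite has_sum1_iff in H, H'. exact (UL_sequence _ _ _ H' H).
Qed.

Lemma has_sum1_ext u v l :
  (forall k, (1 <= k)%nat -> u k = v k) -> has_sum1 u l -> has_sum1 v l.
Proof.
  rewrite !has_sum1_iff. intros E H eps He. destruct (H eps He) as [N HN].
  exists N; intros n Hn. rewrite <- (sumR_ext n u v) by (intros; apply E; lia).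
  apply HN; lia.
Qed.

Lemma Sum1_ext u v : summable1 u -> (forall k, (1 <= k)%nat -> u k = v k) -> Sum1 u = Sum1 v.
Proof.
  intros Su E. symmetry. apply Sum1_eq, (has_sum1_ext u); [exact E | apply Sum1_spec, Su].
Qed.

Lemma summable1_ext u v :
  (forall k, (1 <= k)%nat -> u k = v k) -> summable1 u -> summable1 v.
Proof. intros E [l H]. exists l. exact (has_sum1_ext u v l E H). Qed.

Lemma has_sum1_add u v l1 l2 :
  has_sum1 u l1 -> has_sum1 v l2 -> has_sum1 (fun k => u k + v k) (l1 + l2).
Proof.
  rewrite !has_sum1_iff. intros H1 H2 e He. destruct (CV_plus _ _ _ _ H1 H2 e He) as [N HN].
  exists N; intros n Hn. rewrite sumR_add. apply HN; lia.
Qed.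

Lemma summable1_add u v : summable1 u -> summable1 v -> summable1 (fun k => u k + v k).
Proof. intros [l1 H1] [l2 H2]. exists (l1 + l2). exact (has_sum1_add _ _ _ _ H1 H2). Qed.

Lemma has_sum1_scal c u l : has_sum1 u l -> has_sum1 (fun k => c * u k) (c * l).
Proof.
  rewrite !has_sum1_iff. intros H e He.
  assert (Hc : Un_cv (fun _ => c) c).
  { intros e' He'; exists O; intros; unfold Rdist; rewrite Rminus_diag, Rabs_R0; lra. }
  destruct (CV_mult _ _ _ _ Hc H e He) as [N HN].
  exists N; intros n Hn. rewrite sumR_scal. apply HN; lia.
Qed.

Lemma has_sum1_sub u v l1 l2 :
  has_sum1 u l1 -> has_sum1 v l2 -> has_sum1 (fun k => u k - v k) (l1 - l2).
Proof.
  intros H1 H2. apply (has_sum1_ext (fun k => u k + -1 * v k)); [intros; ring|].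
  replace (l1 - l2) with (l1 + -1 * l2) by ring.
  exact (has_sum1_add _ _ _ _ H1 (has_sum1_scal _ _ _ H2)).
Qed.

Lemma has_sum1_le u v l1 l2 :
  has_sum1 u l1 -> has_sum1 v l2 -> (forall k, (1 <= k)%nat -> u k <= v k) -> l1 <= l2.
Proof.
  rewrite !has_sum1_iff. intros H1 H2 H.
  eapply Rle_cv_lim; [|exact H1|exact H2].
  intros n; apply sumR_le; intros k Hk; apply H, Hk.
Qed.

Lemma Rabs_le_inv x a : Rabs x <= a -> - a <= x <= a.
Proof. unfold Rabs; destruct (Rcase_abs x); lra. Qed.

Lemma has_sum1_abs_le u v l1 l2 :
  has_sum1 u l1 -> has_sum1 v l2 -> (forall k, (1 <= k)%nat -> Rabs (u k) <= v k) ->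
  Rabs l1 <= l2.
Proof.
  intros H1 H2 H. apply Rabs_le. split.
  - assert (-1 * l2 <= l1); [|lra].
    apply (has_sum1_le _ _ _ _ (has_sum1_scal (-1) _ _ H2) H1).
    intros k Hk; specialize (H k Hk); apply Rabs_le_inv in H; lra.
  - apply (has_sum1_le _ _ _ _ H1 H2).
    intros k Hk; specialize (H k Hk); apply Rabs_le_inv in H; lra.
Qed.

Lemma sumR_le_has_sum1 u l n :
  has_sum1 u l -> (forall k, (1 <= k)%nat -> 0 <= u k) -> sumR n u <= l.
Proof.
  rewrite has_sum1_iff. intros H Hp. apply (growing_ineq (fun n => sumR n u)); [|exact H].
  intros m; simpl. assert (0 <= u (S m)) by (apply Hp; lia). lra.
Qed.

Lemma sumR_le_Sum1 u n :
  summable1 u -> (forall k, (1 <= k)%nat -> 0 <= u k) -> sumR n u <= Sum1 u.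
Proof. intros H Hp. exact (sumR_le_has_sum1 u _ n (Sum1_spec u H) Hp). Qed.

Lemma summable1_le u v :
  (forall k, (1 <= k)%nat -> 0 <= u k <= v k) -> summable1 v -> summable1 u.
Proof.
  intros H [l Hl].
  assert (Hg : Un_growing (fun n => sumR n u)).
  { intros m; simpl. assert (0 <= u (S m)) by (apply H; lia). lra. }
  assert (Hb : has_ub (fun n => sumR n u)).
  { exists l. intros x [i ->].
    apply Rle_trans with (sumR i v); [apply sumR_le; intros; apply H; lia|].
    apply (sumR_le_has_sum1 v l i Hl). intros k Hk; specialize (H k Hk); lra. }
  destruct (growing_cv _ Hg Hb) as [l' Hl']. exists l'. apply has_sum1_iff, Hl'.
Qed.

Lemma summable1_abs_le u v :
  (forall k, (1 <= k)%nat -> Rabs (u k) <= v k) -> summable1 v -> summable1 u.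
Proof.
  intros H [l Hl].
  assert (Habs : summable1 (fun k => Rabs (u k))).
  { apply (summable1_le _ v); [|exists l; exact Hl].
    intros k Hk; split; [apply Rabs_pos | apply H, Hk]. }
  assert (Hpos : summable1 (fun k => u k + Rabs (u k))).
  { apply (summable1_le _ (fun k => 2 * v k)); [|exists (2 * l); apply has_sum1_scal, Hl].
    intros k Hk; specialize (H k Hk); apply Rabs_le_inv in H.
    unfold Rabs in *; destruct (Rcase_abs (u k)); lra. }
  destruct Hpos as [l1 H1], Habs as [l2 H2]. exists (l1 - l2).
  apply (has_sum1_ext (fun k => u k + Rabs (u k) - Rabs (u k))); [intros; ring|].
  exact (has_sum1_sub _ _ _ _ H1 H2).
Qed.

Definition tail (K : nat) (u : nat -> R) (k : nat) : R := if (k <=? K)%nat then 0 else u k.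

Lemma has_sum1_tail K u l : has_sum1 u l -> has_sum1 (tail K u) (l - sumR K u).
Proof.
  assert (E : forall d, sumR (K + d) (tail K u) = sumR (K + d) u - sumR K u).
  { induction d as [|d IH].
    - rewrite Nat.add_0_r, (sumR_ext _ _ (fun _ => 0)), (sumR_ext K (fun _ => 0) (fun k => 0 * u k)),
        sumR_scal by (intros k Hk; unfold tail; destruct (Nat.leb_spec k K); lia || ring).
      ring.
    - rewrite Nat.add_succ_r; simpl. rewrite IH. unfold tail.
      destruct (Nat.leb_spec (S (K + d)) K); [lia | ring]. }
  rewrite !has_sum1_iff. intros H e He. destruct (H e He) as [N HN].
  exists (N + K)%nat; intros n Hn. replace n with (K + (n - K))%nat by lia.
  unfold Rdist. rewrite E. replace (sumR (K + (n - K)) u - sumR K u - (l - sumR K u))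
    with (sumR (K + (n - K)) u - l) by ring.
  apply HN; lia.
Qed.

(** * Sums over triangles *)

Definition sum_tri (n : nat) (G : nat -> nat -> R) : R :=
  sumR n (fun i => sumR (n - i) (fun j => G i j)).

Lemma sum_tri_S n G :
  sum_tri (S n) G = sum_tri n G + sumR n (fun i => G i (S n - i)%nat).
Proof.
  unfold sum_tri. simpl sumR at 1. rewrite Nat.sub_diag, <- sumR_add.
  simpl sumR at 1; rewrite Rplus_0_r.
  apply sumR_ext. intros [|k] Hk; [lia|].
  replace (S n - S k)%nat with (S (n - S k)) by lia.
  replace (n - k)%nat with (S (n - S k)) by lia. reflexivity.
Qed.

Lemma sum_tri_ext n G H :
  (forall i j, (1 <= i)%nat -> (1 <= j)%nat -> G i j = H i j) -> sum_tri n G = sum_tri n H.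
Proof.
  intros E. apply sumR_ext. intros i Hi. apply sumR_ext. intros j Hj. apply E; lia.
Qed.

Lemma sum_tri_le n G H :
  (forall i j, (1 <= i)%nat -> (1 <= j)%nat -> G i j <= H i j) -> sum_tri n G <= sum_tri n H.
Proof.
  intros E. apply sumR_le. intros i Hi. apply sumR_le. intros j Hj. apply E; lia.
Qed.

Lemma sum_tri_add n G H :
  sum_tri n (fun i j => G i j + H i j) = sum_tri n G + sum_tri n H.
Proof. unfold sum_tri. rewrite <- sumR_add. apply sumR_ext. intros. apply sumR_add. Qed.

Lemma sum_tri_sub n G H :
  sum_tri n (fun i j => G i j - H i j) = sum_tri n G - sum_tri n H.
Proof. unfold sum_tri. rewrite <- sumR_sub. apply sumR_ext. intros. apply sumR_sub. Qed.

Lemma sum_tri_scal n c G : sum_tri n (fun i j => c * G i j) = c * sum_tri n G.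
Proof. unfold sum_tri. rewrite <- sumR_scal. apply sumR_ext. intros. apply sumR_scal. Qed.

Lemma sum_tri_swap n G : sum_tri n G = sum_tri n (fun i j => G j i).
Proof.
  induction n as [|n IH]; [reflexivity|].
  rewrite !sum_tri_S, IH, <- (sumR_rev n (fun i => G i (S n - i)%nat)).
  f_equal. apply sumR_ext. intros k Hk. f_equal. lia.
Qed.

Lemma sumR_gain_eq n f F :
  sumR n (fun k => f k * sumR (k - 1) (fun l => F (k - l)%nat l))
  = sum_tri n (fun i j => f (i + j)%nat * F i j).
Proof.
  induction n as [|n IH]; [reflexivity|].
  rewrite sum_tri_S, <- IH. change (sumR (S n) ?g) with (sumR n g + g (S n)). f_equal.
  cbv beta. replace (S n - 1)%nat with n by lia.
  rewrite <- sumR_scal, <- (sumR_rev n (fun i => f (i + (S n - i))%nat * F i (S n - i)%nat)).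
  apply sumR_ext. intros k Hk. replace (S n - (S n - k))%nat with k by lia.
  do 2 f_equal. lia.
Qed.

Lemma sum_tri_mul_le n F H :
  (forall k, (1 <= k)%nat -> 0 <= F k) -> (forall k, (1 <= k)%nat -> 0 <= H k) ->
  sum_tri n (fun i j => F i * H j) <= sumR n F * sumR n H.
Proof.
  intros HF HH. unfold sum_tri. rewrite Rmult_comm, <- sumR_scal. apply sumR_le.
  intros i Hi. rewrite sumR_scal, (Rmult_comm (sumR n H)). apply Rmult_le_compat_l; [apply HF; lia|].
  apply sumR_le_mono; [lia | exact HH].
Qed.

(** * Moment weights and the kernel *)

Lemma INR_ge1 k : (1 <= k)%nat -> 1 <= INR k.
Proof. intros H. apply (le_INR 1) in H. simpl in H. lra. Qed.

Lemma pw_pos k x : 0 < pw k x.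
Proof. apply exp_pos. Qed.

Lemma pw_le_exp k x y : (1 <= k)%nat -> x <= y -> pw k x <= pw k y.
Proof. intros Hk Hxy. apply Rle_Rpower; [apply INR_ge1|]; assumption. Qed.

Lemma pw_ge1 k x : (1 <= k)%nat -> 0 <= x -> 1 <= pw k x.
Proof.
  intros Hk Hx. assert (H := INR_ge1 k Hk).
  rewrite <- (Rpower_O (INR k)) by lra. apply pw_le_exp; assumption.
Qed.

Lemma pw_add k x y : pw k (x + y) = pw k x * pw k y.
Proof. apply Rpower_plus. Qed.

Lemma pw_le_base i j x : (1 <= i)%nat -> (i <= j)%nat -> 0 <= x -> pw i x <= pw j x.
Proof.
  intros Hi Hij Hx. assert (H := INR_ge1 i Hi). apply le_INR in Hij.
  apply Rle_Rpower_l; lra.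
Qed.

(* Mean value theorem, using [i + j <= 2 i j] to bound the intermediate point. *)
Lemma pw_add_sub_le i j mu : (1 <= i)%nat -> (1 <= j)%nat -> 1 <= mu ->
  pw (i + j) mu - pw i mu <= mu * Rpower 2 (mu - 1) * pw i (mu - 1) * pw j mu.
Proof.
  intros Hi Hj Hmu. assert (Ii := INR_ge1 i Hi). assert (Ij := INR_ge1 j Hj).
  unfold pw. rewrite plus_INR.
  destruct (MVT_cor2 (fun x => Rpower x mu) (fun x => mu * Rpower x (mu - 1))
              (INR i) (INR i + INR j)) as [c [Hc1 Hc2]]; [lra | |].
  { intros c Hc. apply derivable_pt_lim_power. lra. }
  rewrite Hc1. replace (INR i + INR j - INR i) with (INR j) by ring.
  assert (E1 : Rpower c (mu - 1) <= Rpower (INR i + INR j) (mu - 1)) by (apply Rle_Rpower_l; lra).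
  assert (E2 : Rpower (INR i + INR j) (mu - 1) <= Rpower (2 * (INR i * INR j)) (mu - 1))
    by (apply Rle_Rpower_l; [lra | split; nra]).
  rewrite <- !Rpower_mult_distr in E2 by nra.
  assert (E3 : Rpower (INR j) mu = Rpower (INR j) (mu - 1) * INR j).
  { rewrite <- (Rpower_1 (INR j)) at 3 by lra. rewrite <- Rpower_plus. f_equal. ring. }
  rewrite E3.
  assert (0 < Rpower (INR j) (mu - 1)) by apply exp_pos.
  assert (mu * Rpower c (mu - 1) <= mu * (Rpower 2 (mu - 1) * (Rpower (INR i) (mu - 1) * Rpower (INR j) (mu - 1))))
    by (apply Rmult_le_compat_l; lra).
  nra.
Qed.

Lemma kernel_bound a Astar alpha beta i j :
  assumption_A a Astar alpha beta -> (1 <= i)%nat -> (1 <= j)%nat ->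
  0 <= a i j <= 2 * Astar * pw i beta * pw j beta.
Proof.
  intros (HA0 & _ & _ & Hab & H) Hi Hj. destruct (H i j Hi Hj) as [_ [H0 H1]]. split; [exact H0|].
  assert (pw i alpha <= pw i beta) by (apply pw_le_exp; assumption).
  assert (pw j alpha <= pw j beta) by (apply pw_le_exp; assumption).
  assert (X1 := pw_pos i alpha). assert (X2 := pw_pos j alpha).
  assert (X3 := pw_pos i beta). assert (X4 := pw_pos j beta).
  assert (pw i alpha * pw j beta <= pw i beta * pw j beta) by (apply Rmult_le_compat_r; lra).
  assert (pw i beta * pw j alpha <= pw i beta * pw j beta) by (apply Rmult_le_compat_l; lra).
  nra.
Qed.

Lemma kernel_moment_bound a Astar alpha beta mu i j :
  assumption_A a Astar alpha beta -> 1 <= mu -> (1 <= i)%nat -> (1 <= j)%nat ->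
  a i j * (pw (i + j) mu - pw i mu + pw j mu)
  <= 2 * Astar * (mu * Rpower 2 (mu - 1) + 1) * pw i mu * pw j (mu + beta).
Proof.
  intros HA Hmu Hi Hj. pose proof HA as (HA0 & _ & Hbe & _).
  destruct (kernel_bound _ _ _ _ i j HA Hi Hj) as [Ha0 Ha1].
  assert (Hm := pw_add_sub_le i j mu Hi Hj Hmu).
  assert (Hps : pw i mu <= pw (i + j) mu) by (apply pw_le_base; lia || lra).
  set (P := mu * Rpower 2 (mu - 1)) in *.
  assert (HP : 0 < P) by (apply Rmult_lt_0_compat; [lra | apply exp_pos]).
  assert (E1 : pw i beta * pw i (mu - 1) <= pw i mu)
    by (rewrite <- pw_add; apply pw_le_exp; [lia | lra]).
  assert (E2 : pw i beta <= pw i mu) by (apply pw_le_exp; [lia | lra]).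
  rewrite pw_add.
  assert (X1 := pw_pos i beta). assert (X2 := pw_pos j beta). assert (X3 := pw_pos i (mu - 1)).
  assert (X4 := pw_pos i mu). assert (X5 := pw_pos j mu).
  assert (S1 : pw i beta * (pw (i + j) mu - pw i mu + pw j mu) <= (P + 1) * pw i mu * pw j mu).
  { assert (pw i beta * (pw (i + j) mu - pw i mu) <= pw i beta * (P * pw i (mu - 1) * pw j mu))
      by (apply Rmult_le_compat_l; lra).
    assert (pw i beta * pw i (mu - 1) * (P * pw j mu) <= pw i mu * (P * pw j mu))
      by (apply Rmult_le_compat_r; nra).
    assert (pw i beta * pw j mu <= pw i mu * pw j mu) by (apply Rmult_le_compat_r; lra).
    nra. }
  assert (a i j * (pw (i + j) mu - pw i mu + pw j mu)
          <= 2 * Astar * pw j beta * (pw i beta * (pw (i + j) mu - pw i mu + pw j mu)))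
    by (replace (2 * Astar * pw j beta * (pw i beta * (pw (i + j) mu - pw i mu + pw j mu)))
          with (2 * Astar * pw i beta * pw j beta * (pw (i + j) mu - pw i mu + pw j mu)) by ring;
        apply Rmult_le_compat_r; lra).
  assert (0 <= 2 * Astar * pw j beta) by nra.
  nra.
Qed.

Lemma Cmu_bound mu : 1 <= mu -> mu * Rpower 2 (mu - 1) <= 2 * Cmu mu + 1.
Proof.
  intros Hmu. unfold Cmu.
  assert (E : Rpower 2 (mu - 1) = 2 * Rpower 2 (mu - 2)).
  { replace (mu - 1) with (1 + (mu - 2)) by ring. rewrite Rpower_plus, Rpower_1; lra. }
  assert (Rpower 2 (mu - 2) <= Rpower 2 (Rmax (mu - 2) 0)) by (apply Rle_Rpower; [lra | apply Rmax_l]).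
  assert (mu <= Rmax mu (mu * (mu - 1))) by apply Rmax_l.
  assert (0 < Rpower 2 (mu - 2)) by apply exp_pos.
  nra.
Qed.

(** * The moment estimate for the difference of two right-hand sides *)

Lemma mul_sign_le x s p : Rabs s <= 1 -> 0 <= p -> x * (p * s) <= Rabs x * p.
Proof.
  intros Hs Hp. apply Rle_trans with (Rabs (x * (p * s))); [apply Rle_abs|].
  rewrite !Rabs_mult, (Rabs_pos_eq p Hp).
  apply Rmult_le_compat_l; [apply Rabs_pos|].
  rewrite <- (Rmult_1_r p) at 2. apply Rmult_le_compat_l; assumption.
Qed.

Definition loss_tail (a : nat -> nat -> R) (x : nat -> R) (k m : nat) : R :=
  Sum1 (fun l => a k l * x l) - sumR m (fun l => a k l * x l).

Definition pair_flux_diff (a : nat -> nat -> R) (cc dd : nat -> R) (i j : nat) : R :=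
  a i j * (cc i * cc j - dd i * dd j).

(* The source [s] cancels in the difference of two right-hand sides of (E). *)
Definition coag_diff (a : nat -> nat -> R) (r cc dd : nat -> R) (k : nat) : R :=
  / 2 * (sumR (k - 1) (fun l => a (k - l)%nat l * cc (k - l)%nat * cc l)
         - sumR (k - 1) (fun l => a (k - l)%nat l * dd (k - l)%nat * dd l))
  - (cc k * Sum1 (fun l => a k l * cc l) - dd k * Sum1 (fun l => a k l * dd l))
  - r k * (cc k - dd k).

(* Truncating the loss series at [n - k] turns the first two sums into the same triangle. *)
Lemma coag_diff_partial_eq a r cc dd g n :
  sumR n (fun k => g k * coag_diff a r cc dd k)
  = sum_tri n (fun i j => / 2 * g (i + j)%nat * pair_flux_diff a cc dd i j)
    - sum_tri n (fun i j => g i * pair_flux_diff a cc dd i j)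
    - sumR n (fun k => g k * (cc k * loss_tail a cc k (n - k) - dd k * loss_tail a dd k (n - k)))
    - sumR n (fun k => g k * (r k * (cc k - dd k))).
Proof.
  rewrite <- (sumR_gain_eq n (fun k => / 2 * g k)).
  unfold sum_tri. rewrite <- !sumR_sub. apply sumR_ext. intros k Hk.
  unfold coag_diff, loss_tail, pair_flux_diff.
  rewrite (sumR_ext (k - 1) (fun l => a (k - l)%nat l * (cc (k - l)%nat * cc l - dd (k - l)%nat * dd l))
             (fun l => a (k - l)%nat l * cc (k - l)%nat * cc l - a (k - l)%nat l * dd (k - l)%nat * dd l))
    by (intros; ring).
  rewrite (sumR_ext (n - k) (fun j => g k * (a k j * (cc k * cc j - dd k * dd j)))
             (fun j => g k * cc k * (a k j * cc j) - g k * dd k * (a k j * dd j))) by (intros; ring).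
  rewrite !sumR_sub, !sumR_scal. ring.
Qed.

Section CoagulationDifference.

Variables (a : nat -> nat -> R) (r : nat -> R) (Astar alpha beta Rstar gamma mu : R).
Variables (cc dd sg : nat -> R).

Hypothesis HA : assumption_A a Astar alpha beta.
Hypothesis HR : assumption_R r Rstar gamma alpha beta.
Hypothesis Hmu : 1 <= mu.
Hypothesis Hcc : forall k, (1 <= k)%nat -> 0 <= cc k.
Hypothesis Hdd : forall k, (1 <= k)%nat -> 0 <= dd k.
Hypothesis Scc : summable1 (fun k => pw k mu * cc k).
Hypothesis Sdd : summable1 (fun k => pw k mu * dd k).
Hypothesis SV : summable1 (fun k => pw k (mu + beta) * (cc k + dd k)).
Hypothesis Hsg : forall k, (1 <= k)%nat ->
  Rabs (sg k) <= 1 /\ sg k * (cc k - dd k) = Rabs (cc k - dd k).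

Local Notation N := (Sum1 (fun k => pw k mu * Rabs (cc k - dd k))).
Local Notation V := (Sum1 (fun k => pw k (mu + beta) * (cc k + dd k))).
Local Notation K := (2 * Astar * (mu * Rpower 2 (mu - 1) + 1)).

Lemma kernel_le_moment k l : (1 <= k)%nat -> (1 <= l)%nat ->
  0 <= a k l <= 2 * Astar * pw k beta * pw l mu.
Proof.
  intros Hk Hl. pose proof HA as (HA0 & _ & Hbe & _).
  destruct (kernel_bound _ _ _ _ k l HA Hk Hl) as [H0 H1]. split; [exact H0|].
  assert (pw l beta <= pw l mu) by (apply pw_le_exp; [exact Hl | lra]).
  assert (X := pw_pos k beta).
  assert (2 * Astar * pw k beta * pw l beta <= 2 * Astar * pw k beta * pw l mu)
    by (apply Rmult_le_compat_l; nra).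
  lra.
Qed.

Lemma kernel_row_summable x k : (1 <= k)%nat -> (forall l, (1 <= l)%nat -> 0 <= x l) ->
  summable1 (fun l => pw l mu * x l) -> summable1 (fun l => a k l * x l).
Proof.
  intros Hk Hx [m Hm]. apply (summable1_le _ (fun l => 2 * Astar * pw k beta * (pw l mu * x l))).
  - intros l Hl. destruct (kernel_le_moment k l Hk Hl). specialize (Hx l Hl). split; [nra|].
    rewrite <- Rmult_assoc. apply Rmult_le_compat_r; assumption.
  - exists (2 * Astar * pw k beta * m). apply has_sum1_scal, Hm.
Qed.

Lemma weighted_diff_summable : summable1 (fun k => pw k mu * Rabs (cc k - dd k)).
Proof.
  apply (summable1_le _ (fun k => pw k mu * cc k + pw k mu * dd k)); [| exact (summable1_add _ _ Scc Sdd)].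
  intros k Hk. assert (P := pw_pos k mu). specialize (Hcc k Hk). specialize (Hdd k Hk).
  split; [apply Rmult_le_pos; [lra | apply Rabs_pos]|].
  rewrite <- Rmult_plus_distr_l. apply Rmult_le_compat_l; [lra|].
  unfold Rabs; destruct (Rcase_abs (cc k - dd k)); lra.
Qed.

Lemma weighted_diff_partial_le m : sumR m (fun k => pw k mu * Rabs (cc k - dd k)) <= N.
Proof.
  apply sumR_le_Sum1; [exact weighted_diff_summable|].
  intros k _. apply Rmult_le_pos; [left; apply pw_pos | apply Rabs_pos].
Qed.

Lemma moment_partial_le m : sumR m (fun k => pw k (mu + beta) * (cc k + dd k)) <= V.
Proof.
  apply sumR_le_Sum1; [exact SV|].
  intros k Hk. specialize (Hcc k Hk). specialize (Hdd k Hk).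
  apply Rmult_le_pos; [left; apply pw_pos | lra].
Qed.

Lemma weighted_diff_Sum1_nonneg : 0 <= N.
Proof. exact (Rle_trans _ _ _ (Rle_refl 0) (weighted_diff_partial_le 0)). Qed.

Lemma moment_Sum1_nonneg : 0 <= V.
Proof. exact (Rle_trans _ _ _ (Rle_refl 0) (moment_partial_le 0)). Qed.

Lemma loss_tail_diff_le k m : (1 <= k)%nat ->
  Rabs (loss_tail a cc k m - loss_tail a dd k m) <= 2 * Astar * pw k beta * N.
Proof.
  intros Hk. pose proof HA as (HA0 & _).
  assert (Sc := Sum1_spec _ (kernel_row_summable cc k Hk Hcc Scc)).
  assert (Sd := Sum1_spec _ (kernel_row_summable dd k Hk Hdd Sdd)).
  assert (Htail := has_sum1_tail m _ _ (has_sum1_sub _ _ _ _ Sc Sd)).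
  rewrite sumR_sub in Htail.
  replace (loss_tail a cc k m - loss_tail a dd k m) with
    (Sum1 (fun l => a k l * cc l) - Sum1 (fun l => a k l * dd l)
     - (sumR m (fun l => a k l * cc l) - sumR m (fun l => a k l * dd l)))
    by (unfold loss_tail; ring).
  apply (has_sum1_abs_le _ _ _ _ Htail (has_sum1_scal _ _ _ (Sum1_spec _ weighted_diff_summable))).
  intros l Hl. unfold tail.
  assert (W := Rabs_pos (cc l - dd l)). assert (Y := pw_pos k beta). assert (Z := pw_pos l mu).
  assert (0 <= 2 * Astar * pw k beta * pw l mu) by (apply Rmult_le_pos; nra).
  destruct (l <=? m)%nat; [rewrite Rabs_R0; nra|].
  replace (a k l * cc l - a k l * dd l) with (a k l * (cc l - dd l)) by ring.
  destruct (kernel_le_moment k l Hk Hl).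
  rewrite Rabs_mult, (Rabs_pos_eq (a k l)) by assumption.
  rewrite <- Rmult_assoc. apply Rmult_le_compat_r; assumption.
Qed.

Lemma sign_increment_le i j : (1 <= i)%nat -> (1 <= j)%nat ->
  (cc i - dd i) * (pw (i + j) mu * sg (i + j)%nat - pw i mu * sg i - pw j mu * sg j)
  <= Rabs (cc i - dd i) * (pw (i + j) mu - pw i mu + pw j mu).
Proof.
  intros Hi Hj. destruct (Hsg i Hi) as [_ Hui].
  destruct (Hsg (i + j)%nat ltac:(lia)) as [Hs _]. destruct (Hsg j Hj) as [Hsj _].
  assert (F1 := mul_sign_le (cc i - dd i) _ _ Hs (Rlt_le _ _ (pw_pos (i + j) mu))).
  assert (F2 := mul_sign_le (cc i - dd i) (- sg j) _ ltac:(rewrite Rabs_Ropp; exact Hsj)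
                  (Rlt_le _ _ (pw_pos j mu))).
  replace ((cc i - dd i) * (pw (i + j) mu * sg (i + j)%nat - pw i mu * sg i - pw j mu * sg j))
    with ((cc i - dd i) * (pw (i + j) mu * sg (i + j)%nat) - pw i mu * (sg i * (cc i - dd i))
          + (cc i - dd i) * (pw j mu * - sg j)) by ring.
  rewrite Hui. lra.
Qed.

Lemma pair_flux_diff_le i j : (1 <= i)%nat -> (1 <= j)%nat ->
  / 2 * (pw (i + j) mu * sg (i + j)%nat) * pair_flux_diff a cc dd i j
  - / 2 * (pw i mu * sg i * pair_flux_diff a cc dd i j)
  - / 2 * (pw j mu * sg j * pair_flux_diff a cc dd i j)
  <= / 2 * K * (pw i mu * Rabs (cc i - dd i) * (pw j (mu + beta) * cc j))
     + / 2 * K * (pw i (mu + beta) * dd i * (pw j mu * Rabs (cc j - dd j))).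
Proof.
  intros Hi Hj. unfold pair_flux_diff.
  set (w := pw (i + j) mu * sg (i + j)%nat - pw i mu * sg i - pw j mu * sg j).
  assert (Wi := sign_increment_le i j Hi Hj). fold w in Wi.
  assert (Wj := sign_increment_le j i Hj Hi).
  rewrite (Nat.add_comm j i) in Wj.
  replace (pw (i + j) mu * sg (i + j)%nat - pw j mu * sg j - pw i mu * sg i) with w in Wj
    by (unfold w; ring).
  assert (Ki := kernel_moment_bound _ _ _ _ mu i j HA Hmu Hi Hj).
  assert (Kj := kernel_moment_bound _ _ _ _ mu j i HA Hmu Hj Hi).
  pose proof HA as (_ & _ & _ & _ & Hsym).
  rewrite (proj1 (Hsym j i Hj Hi)), (Nat.add_comm j i) in Kj.
  destruct (kernel_bound _ _ _ _ i j HA Hi Hj) as [Ha _].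
  specialize (Hcc j Hj) as Cj. specialize (Hdd i Hi) as Di.
  assert (Ui := Rabs_pos (cc i - dd i)). assert (Uj := Rabs_pos (cc j - dd j)).
  assert (M1 : a i j * cc j * ((cc i - dd i) * w)
               <= cc j * Rabs (cc i - dd i) * (a i j * (pw (i + j) mu - pw i mu + pw j mu)))
    by (replace (cc j * Rabs (cc i - dd i) * (a i j * (pw (i + j) mu - pw i mu + pw j mu)))
          with (a i j * cc j * (Rabs (cc i - dd i) * (pw (i + j) mu - pw i mu + pw j mu))) by ring;
        apply Rmult_le_compat_l; nra).
  assert (M2 : a i j * dd i * ((cc j - dd j) * w)
               <= dd i * Rabs (cc j - dd j) * (a i j * (pw (i + j) mu - pw j mu + pw i mu)))
    by (replace (dd i * Rabs (cc j - dd j) * (a i j * (pw (i + j) mu - pw j mu + pw i mu)))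
          with (a i j * dd i * (Rabs (cc j - dd j) * (pw (i + j) mu - pw j mu + pw i mu))) by ring;
        apply Rmult_le_compat_l; nra).
  assert (M3 : cc j * Rabs (cc i - dd i) * (a i j * (pw (i + j) mu - pw i mu + pw j mu))
               <= cc j * Rabs (cc i - dd i) * (K * pw i mu * pw j (mu + beta)))
    by (apply Rmult_le_compat_l; nra).
  assert (M4 : dd i * Rabs (cc j - dd j) * (a i j * (pw (i + j) mu - pw j mu + pw i mu))
               <= dd i * Rabs (cc j - dd j) * (K * pw j mu * pw i (mu + beta)))
    by (apply Rmult_le_compat_l; nra).
  replace (/ 2 * (pw (i + j) mu * sg (i + j)%nat) * (a i j * (cc i * cc j - dd i * dd j))
           - / 2 * (pw i mu * sg i * (a i j * (cc i * cc j - dd i * dd j)))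
           - / 2 * (pw j mu * sg j * (a i j * (cc i * cc j - dd i * dd j))))
    with (/ 2 * (a i j * cc j * ((cc i - dd i) * w) + a i j * dd i * ((cc j - dd j) * w)))
    by (unfold w; ring).
  nra.
Qed.

Lemma gain_loss_le n :
  sum_tri n (fun i j => / 2 * (pw (i + j) mu * sg (i + j)%nat) * pair_flux_diff a cc dd i j)
  - sum_tri n (fun i j => pw i mu * sg i * pair_flux_diff a cc dd i j)
  <= / 2 * K * (N * V).
Proof.
  pose proof HA as (HA0 & _ & _ & _ & Hsym).
  assert (Hsw : sum_tri n (fun i j => pw i mu * sg i * pair_flux_diff a cc dd i j)
                = sum_tri n (fun i j => pw j mu * sg j * pair_flux_diff a cc dd i j)).
  { rewrite sum_tri_swap. apply sum_tri_ext. intros i j Hi Hj.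
    unfold pair_flux_diff. rewrite (proj1 (Hsym j i Hj Hi)). ring. }
  assert (E : sum_tri n (fun i j => / 2 * (pw (i + j) mu * sg (i + j)%nat) * pair_flux_diff a cc dd i j
                 - / 2 * (pw i mu * sg i * pair_flux_diff a cc dd i j)
                 - / 2 * (pw j mu * sg j * pair_flux_diff a cc dd i j))
              = sum_tri n (fun i j => / 2 * (pw (i + j) mu * sg (i + j)%nat) * pair_flux_diff a cc dd i j)
                - sum_tri n (fun i j => pw i mu * sg i * pair_flux_diff a cc dd i j)).
  { rewrite !sum_tri_sub, !sum_tri_scal, <- Hsw. lra. }
  rewrite <- E. eapply Rle_trans; [apply sum_tri_le; intros i j Hi Hj; apply pair_flux_diff_le; assumption|].
  rewrite sum_tri_add, !sum_tri_scal.
  assert (Hu : forall k, (1 <= k)%nat -> 0 <= pw k mu * Rabs (cc k - dd k))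
    by (intros; apply Rmult_le_pos; [left; apply pw_pos | apply Rabs_pos]).
  assert (Hc : forall k, (1 <= k)%nat -> 0 <= pw k (mu + beta) * cc k)
    by (intros k Hk; apply Rmult_le_pos; [left; apply pw_pos | apply Hcc, Hk]).
  assert (Hd : forall k, (1 <= k)%nat -> 0 <= pw k (mu + beta) * dd k)
    by (intros k Hk; apply Rmult_le_pos; [left; apply pw_pos | apply Hdd, Hk]).
  assert (Q1 := sum_tri_mul_le n _ _ Hu Hc). assert (Q2 := sum_tri_mul_le n _ _ Hd Hu).
  assert (HV := moment_partial_le n).
  rewrite (sumR_ext n _ (fun k => pw k (mu + beta) * cc k + pw k (mu + beta) * dd k)), sumR_add in HV
    by (intros; ring).
  assert (HN := weighted_diff_partial_le n).
  assert (X1 := sumR_nonneg n _ Hu). assert (X2 := sumR_nonneg n _ Hc). assert (X3 := sumR_nonneg n _ Hd).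
  assert (0 <= / 2 * K).
  { assert (0 < mu * Rpower 2 (mu - 1)) by (apply Rmult_lt_0_compat; [lra | apply exp_pos]). nra. }
  assert (sumR n (fun k => pw k mu * Rabs (cc k - dd k))
          * (sumR n (fun k => pw k (mu + beta) * cc k) + sumR n (fun k => pw k (mu + beta) * dd k))
          <= N * V) by (apply Rmult_le_compat; lra).
  nra.
Qed.

Lemma loss_tail_nonneg x k m : (1 <= k)%nat -> (forall l, (1 <= l)%nat -> 0 <= x l) ->
  summable1 (fun l => pw l mu * x l) -> 0 <= loss_tail a x k m.
Proof.
  intros Hk Hx Sx. unfold loss_tail.
  assert (sumR m (fun l => a k l * x l) <= Sum1 (fun l => a k l * x l)); [|lra].
  apply sumR_le_Sum1; [exact (kernel_row_summable x k Hk Hx Sx)|].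
  intros l Hl. destruct (kernel_le_moment k l Hk Hl). specialize (Hx l Hl). nra.
Qed.

(* The part [- k^mu |cc k - dd k| * loss_tail a cc k _] is nonpositive and is dropped. *)
Lemma loss_tail_term_le n :
  - sumR n (fun k => pw k mu * sg k * (cc k * loss_tail a cc k (n - k) - dd k * loss_tail a dd k (n - k)))
  <= 2 * Astar * N * V.
Proof.
  pose proof HA as (HA0 & _).
  rewrite <- sumR_opp.
  eapply Rle_trans with (sumR n (fun k => 2 * Astar * N * (pw k (mu + beta) * (cc k + dd k)))).
  - apply sumR_le. intros k [Hk _].
    assert (Tc := loss_tail_nonneg cc k (n - k) Hk Hcc Scc).
    assert (Td := loss_tail_diff_le k (n - k) Hk).
    destruct (Hsg k Hk) as [Hs Hu].
    assert (F := mul_sign_le (loss_tail a cc k (n - k) - loss_tail a dd k (n - k)) (- sg k) (pw k mu)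
                   ltac:(rewrite Rabs_Ropp; exact Hs) (Rlt_le _ _ (pw_pos k mu))).
    replace (- (pw k mu * sg k * (cc k * loss_tail a cc k (n - k) - dd k * loss_tail a dd k (n - k))))
      with (- (pw k mu * loss_tail a cc k (n - k)) * (sg k * (cc k - dd k))
            + dd k * ((loss_tail a cc k (n - k) - loss_tail a dd k (n - k)) * (pw k mu * - sg k)))
      by ring.
    rewrite Hu, pw_add.
    specialize (Hcc k Hk) as Ck. specialize (Hdd k Hk) as Dk.
    assert (Pk := pw_pos k mu). assert (Pb := pw_pos k beta). assert (U := Rabs_pos (cc k - dd k)).
    assert (N0 := weighted_diff_Sum1_nonneg).
    assert (G1 : dd k * ((loss_tail a cc k (n - k) - loss_tail a dd k (n - k)) * (pw k mu * - sg k))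
                 <= dd k * (2 * Astar * pw k beta * N * pw k mu)).
    { apply Rmult_le_compat_l; [exact Dk|]. eapply Rle_trans; [exact F|].
      apply Rmult_le_compat_r; lra. }
    assert (0 <= pw k mu * loss_tail a cc k (n - k) * Rabs (cc k - dd k)) by (apply Rmult_le_pos; nra).
    assert (0 <= 2 * Astar * N * (pw k mu * pw k beta) * cc k)
      by (apply Rmult_le_pos; [apply Rmult_le_pos|]; nra).
    nra.
  - rewrite sumR_scal. assert (HV := moment_partial_le n).
    assert (0 <= 2 * Astar * N) by (apply Rmult_le_pos; [lra | exact weighted_diff_Sum1_nonneg]).
    apply Rmult_le_compat_l; assumption.
Qed.

Lemma removal_term_le n :
  Rstar * sumR n (fun k => pw k mu * Rabs (cc k - dd k))
  <= sumR n (fun k => pw k mu * sg k * (r k * (cc k - dd k))).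
Proof.
  destruct HR as (HR0 & Hgam & Hr). rewrite <- sumR_scal. apply sumR_le. intros k [Hk _].
  destruct (Hsg k Hk) as [_ Hu].
  replace (pw k mu * sg k * (r k * (cc k - dd k))) with (r k * (pw k mu * (sg k * (cc k - dd k)))) by ring.
  rewrite Hu, <- !Rmult_assoc. apply Rmult_le_compat_r; [apply Rabs_pos|].
  rewrite !(Rmult_comm _ (pw k mu)). apply Rmult_le_compat_l; [left; apply pw_pos|].
  assert (1 <= pw k gamma) by (apply pw_ge1; [exact Hk | assert (X := Rmax_l 0 (alpha + beta - 1)); lra]).
  specialize (Hr k Hk). nra.
Qed.

Lemma coag_diff_partial_le n :
  sumR n (fun k => pw k mu * sg k * coag_diff a r cc dd k)
  <= Astar * (mu * Rpower 2 (mu - 1) + 3) * V * N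
     - Rstar * sumR n (fun k => pw k mu * Rabs (cc k - dd k)).
Proof.
  rewrite (coag_diff_partial_eq a r cc dd (fun k => pw k mu * sg k)).
  assert (T1 := gain_loss_le n). assert (T2 := loss_tail_term_le n). assert (T3 := removal_term_le n).
  replace (Astar * (mu * Rpower 2 (mu - 1) + 3) * V * N) with (/ 2 * K * (N * V) + 2 * Astar * N * V)
    by field.
  lra.
Qed.

Lemma coag_diff_weighted_le :
  summable1 (fun k => pw k mu * sg k * coag_diff a r cc dd k) ->
  Sum1 (fun k => pw k mu * sg k * coag_diff a r cc dd k)
  <= (2 * Astar * (Cmu mu + 2) * V - Rstar) * N.
Proof.
  intros S.
  set (C := Astar * (mu * Rpower 2 (mu - 1) + 3) * V * N).
  assert (H1 := proj1 (has_sum1_iff _ _) (Sum1_spec _ S)).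
  assert (H2 := proj1 (has_sum1_iff _ _) (has_sum1_scal Rstar _ _ (Sum1_spec _ weighted_diff_summable))).
  assert (Hc : Un_cv (fun _ => C) C)
    by (intros e He; exists O; intros; unfold Rdist; rewrite Rminus_diag, Rabs_R0; lra).
  assert (L : Sum1 (fun k => pw k mu * sg k * coag_diff a r cc dd k) <= C - Rstar * N).
  { eapply Rle_cv_lim; [| exact H1 | exact (CV_minus _ _ _ _ Hc H2)].
    intros n. simpl. rewrite sumR_scal. apply coag_diff_partial_le. }
  pose proof HA as (HA0 & _).
  assert (N0 := weighted_diff_Sum1_nonneg). assert (V0 := moment_Sum1_nonneg).
  assert (CB := Cmu_bound mu Hmu).
  assert (Astar * (mu * Rpower 2 (mu - 1) + 3) * (V * N) <= 2 * Astar * (Cmu mu + 2) * (V * N))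
    by (apply Rmult_le_compat_r; nra).
  unfold C in L. nra.
Qed.

End CoagulationDifference.

(** * Differentiability in [l^1_mu] and Dini derivatives of the norm *)

Lemma abs_summ_ext mu x y :
  (forall k, (1 <= k)%nat -> x k = y k) -> abs_summ mu x -> abs_summ mu y.
Proof. intros E. apply summable1_ext. intros k Hk. rewrite E by exact Hk. reflexivity. Qed.

Lemma abs_summ_nonneg mu x : (forall k, (1 <= k)%nat -> 0 <= x k) -> abs_summ mu x ->
  summable1 (fun k => pw k mu * x k).
Proof. intros Hx. apply summable1_ext. intros k Hk. rewrite Rabs_pos_eq by (apply Hx, Hk). reflexivity. Qed.

Lemma abs_summ_lin mu p q x y :
  abs_summ mu x -> abs_summ mu y -> abs_summ mu (fun k => p * x k + q * y k).
Proof.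
  intros [l1 H1] [l2 H2].
  apply (summable1_le _ (fun k => Rabs p * (pw k mu * Rabs (x k)) + Rabs q * (pw k mu * Rabs (y k))));
    [| exists (Rabs p * l1 + Rabs q * l2); apply has_sum1_add; apply has_sum1_scal; assumption].
  intros k Hk. assert (P := pw_pos k mu). split; [apply Rmult_le_pos; [lra | apply Rabs_pos]|].
  eapply Rle_trans; [apply Rmult_le_compat_l; [lra | apply Rabs_triang]|].
  rewrite !Rabs_mult. lra.
Qed.

Lemma abs_summ_quotient mu X x v h : h <> 0 ->
  abs_summ mu X -> abs_summ mu x -> abs_summ mu v ->
  abs_summ mu (fun k => (X k - x k) / h - v k).
Proof.
  intros Hh SX Sx Sv.
  apply (abs_summ_ext mu (fun k => 1 * (/ h * X k + - / h * x k) + -1 * v k));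
    [intros; field; exact Hh|].
  apply abs_summ_lin; [apply abs_summ_lin|]; assumption.
Qed.

Lemma abs_summ_sub mu x y : abs_summ mu x -> abs_summ mu y -> abs_summ mu (fun k => x k - y k).
Proof.
  intros Sx Sy. apply (abs_summ_ext mu (fun k => 1 * x k + -1 * y k)); [intros; ring|].
  apply abs_summ_lin; assumption.
Qed.

Lemma norm_mu_sub_le mu x y : abs_summ mu x -> abs_summ mu y ->
  norm_mu mu (fun k => x k - y k) <= norm_mu mu x + norm_mu mu y.
Proof.
  intros Sx Sy. unfold norm_mu.
  eapply has_sum1_le;
    [ apply Sum1_spec, abs_summ_sub; assumption
    | exact (has_sum1_add _ _ _ _ (Sum1_spec _ Sx) (Sum1_spec _ Sy)) |].
  intros k Hk. cbv beta. rewrite <- Rmult_plus_distr_l. apply Rmult_le_compat_l; [left; apply pw_pos|].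
  unfold Rminus. rewrite <- (Rabs_Ropp (y k)). apply Rabs_triang.
Qed.

Lemma weighted_term_le_norm_mu mu x k : abs_summ mu x -> (1 <= k)%nat ->
  pw k mu * Rabs (x k) <= norm_mu mu x.
Proof.
  intros Sx Hk. destruct k as [|k]; [lia|].
  eapply Rle_trans; [| apply (sumR_le_Sum1 _ (S k) Sx);
                       intros; apply Rmult_le_pos; [left; apply pw_pos | apply Rabs_pos]].
  simpl. assert (0 <= sumR k (fun k => pw k mu * Rabs (x k)))
    by (apply sumR_nonneg; intros; apply Rmult_le_pos; [left; apply pw_pos | apply Rabs_pos]).
  lra.
Qed.

Definition has_l1_derivative (mu : R) (x : R -> nat -> R) (t : R) (v : nat -> R) : Prop :=
  forall eps, 0 < eps -> exists del, 0 < del /\ forall h, h <> 0 -> Rabs h < del -> 0 < t + h ->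
    norm_mu mu (fun k => (x (t + h) k - x t k) / h - v k) < eps.

(* Each weighted coordinate is dominated by the norm, so the two limits must agree. *)
Lemma has_l1_derivative_coord mu (x : R -> nat -> R) v t k l :
  0 < t -> (1 <= k)%nat -> (forall s, 0 < s -> abs_summ mu (x s)) -> abs_summ mu v ->
  has_l1_derivative mu x t v -> derivable_pt_lim (fun s => x s k) t l -> v k = l.
Proof.
  intros Ht Hk Sx Sv Hq Hd.
  destruct (Req_dec (v k) l) as [E | NE]; [exact E | exfalso].
  set (e := Rabs (v k - l)). assert (He : 0 < e) by (apply Rabs_pos_lt; lra).
  assert (Pk := pw_pos k mu).
  destruct (Hd (e / 2) ltac:(lra)) as [d1 Hd1]. assert (Hd1p := cond_pos d1).
  destruct (Hq (pw k mu * (e / 2)) ltac:(nra)) as [d2 [Hd2 Hq2]].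
  set (h := Rmin (Rmin d1 d2) t / 2).
  assert (Hm1 := Rmin_l (Rmin d1 d2) t). assert (Hm2 := Rmin_r (Rmin d1 d2) t).
  assert (Hm3 := Rmin_l d1 d2). assert (Hm4 := Rmin_r d1 d2).
  assert (0 < Rmin (Rmin d1 d2) t) by (repeat apply Rmin_glb_lt; lra).
  assert (Hh : 0 < h /\ h < d1 /\ h < d2 /\ h < t) by (unfold h; lra).
  assert (Eh : Rabs h = h) by (apply Rabs_pos_eq; lra).
  assert (A1 := Hd1 h ltac:(lra) ltac:(lra)).
  assert (A2 := Hq2 h ltac:(lra) ltac:(lra) ltac:(lra)).
  assert (T := weighted_term_le_norm_mu mu _ k
                 (abs_summ_quotient mu _ _ v h ltac:(lra) (Sx (t + h) ltac:(lra)) (Sx t Ht) Sv) Hk).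
  assert (B : Rabs ((x (t + h) k - x t k) / h - v k) < e / 2)
    by (apply (Rmult_lt_reg_l (pw k mu)); lra).
  assert (e <= Rabs ((x (t + h) k - x t k) / h - v k) + Rabs ((x (t + h) k - x t k) / h - l)).
  { unfold e. replace (v k - l) with (- ((x (t + h) k - x t k) / h - v k) + ((x (t + h) k - x t k) / h - l))
      by ring.
    rewrite <- (Rabs_Ropp ((x (t + h) k - x t k) / h - v k)). apply Rabs_triang. }
  lra.
Qed.

Lemma has_l1_derivative_sub mu (x y : R -> nat -> R) u v t :
  0 < t -> (forall s, 0 < s -> abs_summ mu (x s)) -> (forall s, 0 < s -> abs_summ mu (y s)) ->
  abs_summ mu u -> abs_summ mu v -> has_l1_derivative mu x t u -> has_l1_derivative mu y t v ->
  has_l1_derivative mu (fun s k => x s k - y s k) t (fun k => u k - v k).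
Proof.
  intros Ht Sx Sy Su Sv Hx Hy eps Heps.
  destruct (Hx (eps / 2) ltac:(lra)) as [d1 [Hd1 Q1]]. destruct (Hy (eps / 2) ltac:(lra)) as [d2 [Hd2 Q2]].
  exists (Rmin d1 d2). split; [apply Rmin_glb_lt; assumption|].
  intros h Hh Hhd Hth. assert (M1 := Rmin_l d1 d2). assert (M2 := Rmin_r d1 d2).
  specialize (Q1 h Hh ltac:(lra) Hth). specialize (Q2 h Hh ltac:(lra) Hth).
  assert (Sqx := abs_summ_quotient mu _ _ u h Hh (Sx _ Hth) (Sx _ Ht) Su).
  assert (Sqy := abs_summ_quotient mu _ _ v h Hh (Sy _ Hth) (Sy _ Ht) Sv).
  assert (E : norm_mu mu (fun k => ((x (t + h) k - x t k) / h - u k) - ((y (t + h) k - y t k) / h - v k))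
              = norm_mu mu (fun k => (x (t + h) k - y (t + h) k - (x t k - y t k)) / h - (u k - v k))).
  { apply Sum1_ext.
    - apply abs_summ_sub; assumption.
    - intros k _. do 2 f_equal. field. exact Hh. }
  cbv beta. rewrite <- E. eapply Rle_lt_trans; [apply norm_mu_sub_le; assumption | lra].
Qed.

Definition sgn (z : R) : R := if Rle_dec 0 z then 1 else -1.

(* The one-sided derivative of [h |-> |x + h y|] at [0] in the direction of the sign of [h] is
   [dir_sign h x y * y]. *)
Definition dir_sign (h x y : R) : R :=
  if Req_EM_T x 0 then sgn h * sgn y else sgn x.

Lemma Rabs_sgn z : Rabs (sgn z) = 1.
Proof. unfold sgn; destruct (Rle_dec 0 z); [apply Rabs_R1 | rewrite Rabs_left; lra]. Qed.

Lemma dir_sign_spec h x y : Rabs (dir_sign h x y) <= 1 /\ dir_sign h x y * x = Rabs x.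
Proof.
  unfold dir_sign. destruct (Req_EM_T x 0) as [-> | Hx].
  - rewrite Rabs_mult, !Rabs_sgn, Rabs_R0. split; lra.
  - rewrite Rabs_sgn. split; [lra|].
    unfold sgn, Rabs; destruct (Rle_dec 0 x), (Rcase_abs x); lra.
Qed.

Lemma abs_quotient_eq h x y : h <> 0 -> (x <> 0 -> Rabs h * Rabs y < Rabs x) ->
  (Rabs (x + h * y) - Rabs x) / h = dir_sign h x y * y.
Proof.
  intros Hh Hs. unfold dir_sign, sgn. destruct (Req_EM_T x 0) as [-> | Hx].
  - rewrite Rplus_0_l, Rabs_R0, Rminus_0_r, Rabs_mult.
    destruct (Rle_dec 0 h), (Rle_dec 0 y);
      [rewrite (Rabs_pos_eq h), (Rabs_pos_eq y) | rewrite (Rabs_pos_eq h), (Rabs_left y)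
      | rewrite (Rabs_left h), (Rabs_pos_eq y) | rewrite (Rabs_left h), (Rabs_left y)];
      try lra; field; exact Hh.
  - specialize (Hs Hx). rewrite <- Rabs_mult in Hs. apply Rabs_def2 in Hs.
    destruct (Rle_dec 0 x).
    + rewrite (Rabs_pos_eq x) in * by lra. rewrite Rabs_pos_eq by lra. field; exact Hh.
    + rewrite (Rabs_left x) in * by lra. rewrite Rabs_left by lra. field; exact Hh.
Qed.

Lemma abs_quotient_eq_eventually (x y : nat -> R) K :
  exists del, 0 < del /\ forall h, h <> 0 -> Rabs h < del -> forall k, (1 <= k <= K)%nat ->
    (Rabs (x k + h * y k) - Rabs (x k)) / h = dir_sign h (x k) (y k) * y k.
Proof.
  induction K as [|K [d [Hd H]]].
  - exists 1. split; [lra | intros; lia].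
  - set (dk := if Req_EM_T (x (S K)) 0 then 1 else Rabs (x (S K)) / (Rabs (y (S K)) + 1)).
    assert (Y := Rabs_pos (y (S K))).
    assert (Hdk : 0 < dk).
    { unfold dk. destruct Req_EM_T; [lra|]. apply Rdiv_lt_0_compat; [apply Rabs_pos_lt; assumption | lra]. }
    exists (Rmin d dk). split; [apply Rmin_glb_lt; assumption|].
    intros h Hh Hhd k Hk. assert (H1 := Rmin_l d dk). assert (H2 := Rmin_r d dk).
    destruct (Nat.eq_dec k (S K)) as [-> | Hne]; [| apply H; lra || lia].
    apply abs_quotient_eq; [exact Hh|]. intros Hx.
    assert (Edk : dk = Rabs (x (S K)) / (Rabs (y (S K)) + 1))
      by (unfold dk; destruct Req_EM_T; [contradiction | reflexivity]).
    assert (Hhk : Rabs h < Rabs (x (S K)) / (Rabs (y (S K)) + 1)) by (rewrite <- Edk; lra).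
    apply (Rmult_lt_compat_r (Rabs (y (S K)) + 1)) in Hhk; [|lra].
    unfold Rdiv in Hhk. rewrite Rmult_assoc, Rinv_l, Rmult_1_r in Hhk by lra.
    assert (Hh0 := Rabs_pos h). nra.
Qed.

Lemma abs_quotient_le h x y : h <> 0 -> Rabs ((Rabs (x + h * y) - Rabs x) / h) <= Rabs y.
Proof.
  intros Hh. unfold Rdiv. rewrite Rabs_mult, Rabs_inv.
  assert (H := Rabs_triang_inv2 (x + h * y) x).
  replace (x + h * y - x) with (h * y) in H by ring. rewrite Rabs_mult in H.
  assert (Hp : 0 < Rabs h) by (apply Rabs_pos_lt; exact Hh).
  apply (Rmult_le_reg_l (Rabs h)); [exact Hp|].
  rewrite (Rmult_comm (Rabs (Rabs (x + h * y) - Rabs x))), <- Rmult_assoc, Rinv_r, Rmult_1_l by lra.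
  exact H.
Qed.

Lemma abs_quotient_split X x y h : h <> 0 ->
  (Rabs X - Rabs x) / h <= (Rabs (x + h * y) - Rabs x) / h + Rabs ((X - x) / h - y).
Proof.
  intros Hh.
  assert (B : Rabs ((Rabs X - Rabs (x + h * y)) / h) <= Rabs ((X - x) / h - y)).
  { unfold Rdiv. rewrite Rabs_mult.
    replace ((X - x) * / h - y) with ((X - (x + h * y)) * / h) by (field; exact Hh).
    rewrite Rabs_mult. apply Rmult_le_compat_r; [apply Rabs_pos | apply Rabs_triang_inv2]. }
  apply Rabs_le_inv in B.
  replace ((Rabs X - Rabs x) / h) with ((Rabs (x + h * y) - Rabs x) / h + (Rabs X - Rabs (x + h * y)) / h)
    by (field; exact Hh).
  lra.
Qed.

Lemma summable_abs_quotient mu x y h : h <> 0 -> abs_summ mu y ->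
  summable1 (fun k => pw k mu * ((Rabs (x k + h * y k) - Rabs (x k)) / h)).
Proof.
  intros Hh Sy. apply (summable1_abs_le _ (fun k => pw k mu * Rabs (y k))); [intros k Hk | exact Sy].
  rewrite Rabs_mult, Rabs_pos_eq by (left; apply pw_pos).
  apply Rmult_le_compat_l; [left; apply pw_pos | apply abs_quotient_le, Hh].
Qed.

Lemma summable_sign_mul mu sg y : (forall k, (1 <= k)%nat -> Rabs (sg k) <= 1) -> abs_summ mu y ->
  summable1 (fun k => pw k mu * sg k * y k).
Proof.
  intros Hs Sy. apply (summable1_abs_le _ (fun k => pw k mu * Rabs (y k))); [intros k Hk | exact Sy].
  rewrite Rmult_assoc, !Rabs_mult, (Rabs_pos_eq (pw k mu)) by (left; apply pw_pos).
  apply Rmult_le_compat_l; [left; apply pw_pos|].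
  specialize (Hs k Hk). assert (Y := Rabs_pos (y k)). assert (S := Rabs_pos (sg k)). nra.
Qed.

(* Only finitely many coordinates matter up to [eps]; on those the quotients are eventually exact. *)
Lemma Sum1_abs_quotient_le mu (x y : nat -> R) eps : abs_summ mu y -> 0 < eps ->
  exists del, 0 < del /\ forall h, h <> 0 -> Rabs h < del ->
    Sum1 (fun k => pw k mu * ((Rabs (x k + h * y k) - Rabs (x k)) / h))
    <= Sum1 (fun k => pw k mu * dir_sign h (x k) (y k) * y k) + eps.
Proof.
  intros Sy Heps. assert (HY := Sum1_spec _ Sy).
  destruct (proj1 (has_sum1_iff _ _) HY (eps / 4) ltac:(lra)) as [K HK].
  specialize (HK K (le_n K)). unfold Rdist in HK. rewrite Rabs_minus_sym in HK.
  apply Rabs_def2 in HK.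
  destruct (abs_quotient_eq_eventually x y K) as [del [Hdel Heq]].
  exists del. split; [exact Hdel|]. intros h Hh Hhd.
  assert (Hd := has_sum1_sub _ _ _ _ (Sum1_spec _ (summable_abs_quotient mu x y h Hh Sy))
                  (Sum1_spec _ (summable_sign_mul mu _ y (fun k _ => proj1 (dir_sign_spec h (x k) (y k))) Sy))).
  apply (has_sum1_ext _ (tail K (fun k => pw k mu * ((Rabs (x k + h * y k) - Rabs (x k)) / h)
                                    - pw k mu * dir_sign h (x k) (y k) * y k))) in Hd.
  2: { intros k Hk. unfold tail. destruct (Nat.leb_spec k K); [|reflexivity].
       rewrite Heq by (assumption || lia). ring. }
  assert (B := has_sum1_abs_le _ _ _ _ Hd (has_sum1_tail K _ _ (has_sum1_scal 2 _ _ HY))).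
  rewrite sumR_scal in B.
  assert (Sum1 (fun k => pw k mu * ((Rabs (x k + h * y k) - Rabs (x k)) / h))
          - Sum1 (fun k => pw k mu * dir_sign h (x k) (y k) * y k)
          <= 2 * Sum1 (fun k => pw k mu * Rabs (y k)) - 2 * sumR K (fun k => pw k mu * Rabs (y k))).
  { eapply Rle_trans; [apply Rle_abs | apply B]. intros k Hk. unfold tail.
    destruct (k <=? K)%nat.
    - rewrite Rabs_R0. assert (X := Rabs_pos (y k)). assert (P := pw_pos k mu). nra.
    - replace (pw k mu * ((Rabs (x k + h * y k) - Rabs (x k)) / h) - pw k mu * dir_sign h (x k) (y k) * y k)
        with (pw k mu * ((Rabs (x k + h * y k) - Rabs (x k)) / h - dir_sign h (x k) (y k) * y k)) by ring.
      rewrite Rabs_mult, Rabs_pos_eq by (left; apply pw_pos).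
      replace (2 * (pw k mu * Rabs (y k))) with (pw k mu * (2 * Rabs (y k))) by ring.
      apply Rmult_le_compat_l; [left; apply pw_pos|].
      eapply Rle_trans; [apply Rabs_triang|]. rewrite Rabs_Ropp, Rabs_mult.
      assert (Q := abs_quotient_le h (x k) (y k) Hh).
      destruct (dir_sign_spec h (x k) (y k)) as [Hs _]. assert (X := Rabs_pos (y k)).
      assert (S := Rabs_pos (dir_sign h (x k) (y k))). nra. }
  lra.
Qed.

Lemma norm_mu_quotient_le mu X x v h : h <> 0 ->
  abs_summ mu X -> abs_summ mu x -> abs_summ mu v ->
  (norm_mu mu X - norm_mu mu x) / h
  <= Sum1 (fun k => pw k mu * ((Rabs (x k + h * v k) - Rabs (x k)) / h))
     + norm_mu mu (fun k => (X k - x k) / h - v k).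
Proof.
  intros Hh SX Sx Sv.
  assert (Sq := abs_summ_quotient mu X x v h Hh SX Sx Sv).
  unfold norm_mu.
  replace ((Sum1 (fun k => pw k mu * Rabs (X k)) - Sum1 (fun k => pw k mu * Rabs (x k))) / h)
    with (/ h * (Sum1 (fun k => pw k mu * Rabs (X k)) - Sum1 (fun k => pw k mu * Rabs (x k))))
    by (unfold Rdiv; ring).
  eapply has_sum1_le;
    [ exact (has_sum1_scal _ _ _ (has_sum1_sub _ _ _ _ (Sum1_spec _ SX) (Sum1_spec _ Sx)))
    | exact (has_sum1_add _ _ _ _ (Sum1_spec _ (summable_abs_quotient mu x v h Hh Sv)) (Sum1_spec _ Sq)) |].
  intros k Hk. cbv beta.
  replace (/ h * (pw k mu * Rabs (X k) - pw k mu * Rabs (x k)))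
    with (pw k mu * ((Rabs (X k) - Rabs (x k)) / h)) by (field; exact Hh).
  rewrite <- Rmult_plus_distr_l. apply Rmult_le_compat_l; [left; apply pw_pos|].
  apply abs_quotient_split, Hh.
Qed.

(* Where [x t] vanishes, the sign realising the difference quotient depends on the sign of [h];
   hence the bound is required for every admissible sign sequence [sg]. *)
Lemma norm_mu_ddt_le mu (x : R -> nat -> R) v t B :
  0 < t -> (forall s, 0 < s -> abs_summ mu (x s)) -> abs_summ mu v -> has_l1_derivative mu x t v ->
  (forall sg, (forall k, (1 <= k)%nat -> Rabs (sg k) <= 1 /\ sg k * x t k = Rabs (x t k)) ->
     Sum1 (fun k => pw k mu * sg k * v k) <= B) ->
  ddt_le (fun s => norm_mu mu (x s)) t B.
Proof.
  intros Ht Sx Sv Hq Hsg eps Heps.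
  destruct (Sum1_abs_quotient_le mu (x t) v (eps / 2) Sv ltac:(lra)) as [d1 [Hd1 H1]].
  destruct (Hq (eps / 2) ltac:(lra)) as [d2 [Hd2 H2]].
  exists (Rmin d1 d2). split; [apply Rmin_glb_lt; assumption|].
  intros h Hh Hhd Hth. assert (M1 := Rmin_l d1 d2). assert (M2 := Rmin_r d1 d2).
  assert (Q := norm_mu_quotient_le mu (x (t + h)) (x t) v h Hh (Sx _ Hth) (Sx _ Ht) Sv).
  assert (S := Hsg (fun k => dir_sign h (x t k) (v k)) (fun k _ => dir_sign_spec h (x t k) (v k))).
  specialize (H1 h Hh ltac:(lra)). specialize (H2 h Hh ltac:(lra) Hth).
  cbv beta in *. lra.
Qed.

Lemma coag_rhs_sub a s r (c d : nat -> R -> R) k t :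
  coag_rhs a s r c k t - coag_rhs a s r d k t = coag_diff a r (fun k => c k t) (fun k => d k t) k.
Proof. unfold coag_rhs, coag_diff. ring. Qed.

Lemma global_solution_nonneg a s r cin c t k :
  global_solution a s r cin c -> 0 <= t -> (1 <= k)%nat -> 0 <= c k t.
Proof. intros (Hpos & _) Ht Hk. exact (proj1 (Hpos k Hk) t Ht). Qed.

Lemma global_solution_abs_summ a s r cin c mu t :
  global_solution a s r cin c -> 1 <= mu -> 0 < t -> abs_summ mu (fun k => c k t).
Proof.
  intros (_ & _ & _ & HC & _) Hmu Ht. destruct (HC mu Hmu) as [D [HD _]]. exact (proj1 (HD t Ht)).
Qed.

Lemma global_solution_moment a s r cin c mu t :
  global_solution a s r cin c -> 1 <= mu -> 0 < t -> summable1 (fun k => pw k mu * c k t).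
Proof.
  intros Hc Hmu Ht. apply abs_summ_nonneg; [intros k Hk | exact (global_solution_abs_summ _ _ _ _ _ _ _ Hc Hmu Ht)]. exact (global_solution_nonneg _ _ _ _ _ _ _ Hc (Rlt_le _ _ Ht) Hk).
Qed.

Lemma global_solution_l1_derivative a s r cin c mu t :
  global_solution a s r cin c -> 1 <= mu -> 0 < t ->
  exists D : nat -> R, abs_summ mu D /\ (forall k, (1 <= k)%nat -> D k = coag_rhs a s r c k t)
    /\ has_l1_derivative mu (fun s k => c k s) t D.
Proof.
  intros (_ & Hder & _ & HC & _) Hmu Ht. destruct (HC mu Hmu) as [D [HD [Hq _]]].
  exists (D t). split; [exact (proj2 (HD t Ht))|]. split; [|exact (Hq t Ht)].
  intros k Hk.
  exact (has_l1_derivative_coord mu (fun s k => c k s) (D t) t k _ Ht Hk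
           (fun s Hs => proj1 (HD s Hs)) (proj2 (HD t Ht)) (Hq t Ht) (Hder k Hk t Ht)).
Qed.

Lemma global_solution_rhs_diff_le a s r Astar alpha beta Rstar gamma cin din c d mu t sg :
  assumption_A a Astar alpha beta -> assumption_R r Rstar gamma alpha beta ->
  global_solution a s r cin c -> global_solution a s r din d -> 1 <= mu -> 0 < t ->
  (forall k, (1 <= k)%nat -> Rabs (sg k) <= 1 /\ sg k * (c k t - d k t) = Rabs (c k t - d k t)) ->
  summable1 (fun k => pw k mu * sg k * (coag_rhs a s r c k t - coag_rhs a s r d k t)) ->
  Sum1 (fun k => pw k mu * sg k * (coag_rhs a s r c k t - coag_rhs a s r d k t))
  <= (2 * Astar * (Cmu mu + 2) * Sum1 (fun l => pw l (mu + beta) * (c l t + d l t)) - Rstar)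
     * Ndist mu c d t.
Proof.
  intros HA HR Hc Hd Hmu Ht Hsg Ssg.
  assert (E : forall k, (1 <= k)%nat ->
    pw k mu * sg k * (coag_rhs a s r c k t - coag_rhs a s r d k t)
    = pw k mu * sg k * coag_diff a r (fun k => c k t) (fun k => d k t) k)
    by (intros; rewrite coag_rhs_sub; reflexivity).
  rewrite (Sum1_ext _ _ Ssg E).
  assert (Hbe : 0 <= beta) by (destruct HA as (_ & _ & Hbe & _); lra).
  apply (coag_diff_weighted_le a r Astar alpha beta Rstar gamma mu); try assumption.
  - intros k Hk. exact (global_solution_nonneg _ _ _ _ _ _ _ Hc (Rlt_le _ _ Ht) Hk).
  - intros k Hk. exact (global_solution_nonneg _ _ _ _ _ _ _ Hd (Rlt_le _ _ Ht) Hk).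
  - exact (global_solution_moment _ _ _ _ _ _ _ Hc Hmu Ht).
  - exact (global_solution_moment _ _ _ _ _ _ _ Hd Hmu Ht).
  - apply (summable1_ext (fun k => pw k (mu + beta) * c k t + pw k (mu + beta) * d k t)); [intros; ring|].
    apply summable1_add;
      [apply (global_solution_moment _ _ _ _ _ _ t Hc) | apply (global_solution_moment _ _ _ _ _ _ t Hd)]; lra.
  - exact (summable1_ext _ _ E Ssg).
Qed.

Theorem mainTheorem13 (a : nat -> nat -> R) (s r : nat -> R)
    (Astar alpha beta Rstar gamma : R)
    (cin din : nat -> R) (c d : nat -> R -> R) :
  assumption_A a Astar alpha beta ->
  assumption_R r Rstar gamma alpha beta ->
  assumption_S s ->
  in_l1 1 cin -> in_l1 1 din ->
  global_solution a s r cin c ->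
  global_solution a s r din d ->
  forall mu, 1 <= mu -> forall t, 0 < t ->
    ddt_le (Ndist mu c d) t
      ((2 * Astar * (Cmu mu + 2)
          * Sum1 (fun l => pw l (mu + beta) * (c l t + d l t)) - Rstar)
       * Ndist mu c d t).
Proof.
  intros HA HR _ _ _ Hc Hd mu Hmu t Ht.
  destruct (global_solution_l1_derivative _ _ _ _ _ mu t Hc Hmu Ht) as (Dc & SDc & EDc & QDc).
  destruct (global_solution_l1_derivative _ _ _ _ _ mu t Hd Hmu Ht) as (Dd & SDd & EDd & QDd).
  assert (Sc := fun s => global_solution_abs_summ _ _ _ _ _ mu s Hc Hmu).
  assert (Sd := fun s => global_solution_abs_summ _ _ _ _ _ mu s Hd Hmu).
  change (Ndist mu c d) with (fun s => norm_mu mu (fun k => c k s - d k s)).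
  apply (norm_mu_ddt_le mu (fun s k => c k s - d k s) (fun k => Dc k - Dd k) t _ Ht).
  - intros s' Hs'. apply abs_summ_sub; auto.
  - apply abs_summ_sub; assumption.
  - exact (has_l1_derivative_sub mu _ _ Dc Dd t Ht Sc Sd SDc SDd QDc QDd).
  - intros sg Hsg.
    assert (E : forall k, (1 <= k)%nat -> pw k mu * sg k * (Dc k - Dd k)
                  = pw k mu * sg k * (coag_rhs a s r c k t - coag_rhs a s r d k t))
      by (intros k Hk; rewrite EDc, EDd by exact Hk; reflexivity).
    assert (Ssg := summable_sign_mul mu sg _ (fun k Hk => proj1 (Hsg k Hk)) (abs_summ_sub _ _ _ SDc SDd)).
    rewrite (Sum1_ext _ _ Ssg E).
    exact (global_solution_rhs_diff_le _ _ _ _ _ _ _ _ _ _ _ _ _ _ sg HA HR Hc Hd Hmu Ht Hsg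
             (summable1_ext _ _ E Ssg)).
Qed.
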